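(* Let $d\ge 1$, let $\gamma>0$ be real and let $\varepsilon>0$. There exists a positive integer $k$ (depending only on $d,\gamma,\varepsilon$, not on $n$ or $\lambda$) with the following property. For every $n$ and every partition $\lambda=(\lambda_1,\dots,\lambda_d)\vdash n$ with exactly $d$ parts satisfying $\lambda_j/n\ge\gamma$ for all $j=1,\dots,d$, there exist integers $1\le i\le d+1$ and $1\le q<k$ and a partition $\mu=(\mu_1,\dots,\mu_{d+1})$ of $n'=kn$ such that (1) $\mu_j=q\lambda_j$ for all $j\le i-1$; (2) $\mu_{j+1}=q\lambda_j$ for all $j$ with $i\le j\le d$ (and $\mu_i=(k-q)n$); (3) $|\Phi(\mu)-\Phi(\lambda)-1|<\varepsilon$.
   Context: For real numbers $x_1,\dots,x_k\ge 0$ with $x_1+\cdots+x_k=1$ define $\Phi(x_1,\dots,x_k)=\dfrac{1}{x_1^{x_1}\cdots x_k^{x_k}}$, with $0^0=1$. For a partition $\lambda=(\lambda_1,\dots,\lambda_k)\vdash n$ put $\Phi(\lambda)=\Phi(\lambda_1/n,\dots,\lambda_k/n)$ (zero parts may be appended without changing the value). *)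

From Stdlib Require Import Reals Lra Lia List Sorted.
Import ListNotations.
Open Scope R_scope.

(* x^x with the convention 0^0 = 1 (arguments are in [0,1] in all uses). *)
Definition xpowx (x : R) : R :=
  if Req_EM_T x 0 then 1 else Rpower x x.

Definition Phi (xs : list R) : R :=
  / fold_right Rmult 1 (map xpowx xs).

Definition sumn (l : list nat) : nat := fold_right Nat.add 0%nat l.

Definition is_partition (lam : list nat) (n : nat) : Prop :=
  sumn lam = n /\ Sorted ge lam /\ Forall (fun a => (0 < a)%nat) lam.

Definition Phi_part (lam : list nat) : R :=
  Phi (map (fun a => INR a / INR (sumn lam)) lam).

(* Write t = q/k and P = Phi(lambda).  The frequencies of mu are 1 - t together with t times
   those of lambda, so by the grouping rule for entropy
   Phi(mu) = P^t / (t^t (1-t)^(1-t)).  As a function of t this is maximal at t = P/(P+1),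
   with value P + 1, and the deficit is (P + 1) times a binary KL divergence, hence
   quadratic in the distance to the maximiser.  Since 1 <= P <= 1/gamma, choosing
   q = floor (k P/(P+1)) makes the error O(1/k), uniformly in n and lambda. *)

From Stdlib Require Import Reals Lra Lia List Sorted ZArith.
Open Scope R_scope.

Lemma ln_le_sub1 x : 0 < x -> ln x <= x - 1.
Proof. intros Hx. pose proof (exp_ineq1_le (ln x)) as H. rewrite exp_ln in H; lra. Qed.

Lemma ln_le_ln x y : 0 < x -> x <= y -> ln x <= ln y.
Proof. intros Hx [Hxy | ->]; [left; apply ln_increasing|]; lra. Qed.

Lemma exp_le_exp x y : x <= y -> exp x <= exp y.
Proof. intros [Hxy | ->]; [left; apply exp_increasing|]; lra. Qed.

Lemma exp_sub_le x y : x <= y -> 0 <= exp y - exp x <= exp y * (y - x).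
Proof.
  intros Hxy. pose proof (exp_le_exp _ _ Hxy).
  assert (Hsplit : exp x = exp y * exp (x - y)) by (rewrite <- exp_plus; f_equal; ring).
  pose proof (exp_ineq1_le (x - y)). pose proof (exp_pos y).
  split; [lra | nra].
Qed.

Lemma ln_div x y : 0 < x -> 0 < y -> ln (x / y) = ln x - ln y.
Proof.
  intros Hx Hy. unfold Rdiv. rewrite ln_mult, ln_Rinv; try lra.
  now apply Rinv_0_lt_compat.
Qed.

Lemma binary_kl_bounds t s : 0 < t < 1 -> 0 < s < 1 ->
  0 <= t * ln (t / s) + (1 - t) * ln ((1 - t) / (1 - s)) <= (t - s) ^ 2 / (s * (1 - s)).
Proof.
  intros Ht Hs.
  rewrite !ln_div by lra.
  pose proof (ln_le_sub1 (s / t)) as Hst. pose proof (ln_le_sub1 (t / s)) as Hts.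
  pose proof (ln_le_sub1 ((1 - s) / (1 - t))) as Hst'.
  pose proof (ln_le_sub1 ((1 - t) / (1 - s))) as Hts'.
  rewrite !ln_div in Hst, Hts, Hst', Hts' by lra.
  specialize (Hst ltac:(apply Rdiv_lt_0_compat; lra)).
  specialize (Hts ltac:(apply Rdiv_lt_0_compat; lra)).
  specialize (Hst' ltac:(apply Rdiv_lt_0_compat; lra)).
  specialize (Hts' ltac:(apply Rdiv_lt_0_compat; lra)).
  assert (Ht1 : t * (s / t - 1) = s - t) by (field; lra).
  assert (Ht2 : (1 - t) * ((1 - s) / (1 - t) - 1) = t - s) by (field; lra).
  assert (Ht3 : t * (t / s - 1) + (1 - t) * ((1 - t) / (1 - s) - 1)
                = (t - s) ^ 2 / (s * (1 - s))) by (field; lra).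
  split; nra.
Qed.

Definition plogp (x : R) : R := x * ln x.

(* The deficit (P + 1) - P^t / (t^t (1-t)^(1-t)) is at most (P + 1) times the KL divergence
   of (t, 1-t) from (P/(P+1), 1/(P+1)). *)
Lemma binary_mixing_bound P t : 0 < P -> 0 < t < 1 ->
  Rabs (exp (t * ln P - plogp t - plogp (1 - t)) - (P + 1))
  <= (t - P / (P + 1)) ^ 2 * (P + 1) ^ 3 / P.
Proof.
  intros HP Ht. unfold plogp.
  set (s := P / (P + 1)).
  assert (Hs : 0 < s < 1) by (unfold s; split;
    [apply Rdiv_lt_0_compat | apply (Rmult_lt_reg_r (P + 1)); [|field_simplify]]; lra).
  assert (Hln_s : ln s = ln P - ln (P + 1)) by (apply ln_div; lra).
  assert (Hln_1s : ln (1 - s) = - ln (P + 1)).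
  { replace (1 - s) with (/ (P + 1)) by (unfold s; field; lra). apply ln_Rinv; lra. }
  set (A := t * ln P - t * ln t - (1 - t) * ln (1 - t)).
  set (B := ln (P + 1)).
  assert (HBA : B - A = t * ln (t / s) + (1 - t) * ln ((1 - t) / (1 - s))).
  { rewrite !ln_div, Hln_s, Hln_1s by lra. unfold A, B. ring. }
  assert (Hchi : (t - s) ^ 2 / (s * (1 - s)) = (t - s) ^ 2 * (P + 1) ^ 2 / P)
    by (unfold s; field; lra).
  pose proof (binary_kl_bounds t s Ht Hs) as Hkl. rewrite <- HBA, Hchi in Hkl.
  assert (HeB : exp B = P + 1) by (apply exp_ln; lra).
  destruct (exp_sub_le A B ltac:(lra)) as [Hlo Hhi]. rewrite HeB in Hlo, Hhi.
  rewrite Rabs_left1 by lra.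
  assert ((P + 1) * (B - A) <= (P + 1) * ((t - s) ^ 2 * (P + 1) ^ 2 / P))
    by (apply Rmult_le_compat_l; lra).
  replace ((t - s) ^ 2 * (P + 1) ^ 3 / P) with ((P + 1) * ((t - s) ^ 2 * (P + 1) ^ 2 / P))
    by (field; lra).
  lra.
Qed.

Definition sumR (l : list R) : R := fold_right Rplus 0 l.

Lemma sumR_app l1 l2 : sumR (l1 ++ l2) = sumR l1 + sumR l2.
Proof. induction l1 as [|a l1 IH]; simpl; [lra|]. unfold sumR in *; simpl; rewrite IH; lra. Qed.

Lemma sumR_map_le {A} (f g : A -> R) l :
  Forall (fun a => f a <= g a) l -> sumR (map f l) <= sumR (map g l).
Proof. induction 1; unfold sumR in *; simpl; lra. Qed.

Lemma sumR_map_ext {A} (f g : A -> R) l :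
  Forall (fun a => f a = g a) l -> sumR (map f l) = sumR (map g l).
Proof. induction 1; unfold sumR in *; simpl; lra. Qed.

Lemma sumR_map_lin {A} c1 c2 (f g : A -> R) l :
  sumR (map (fun a => c1 * f a + c2 * g a) l) = c1 * sumR (map f l) + c2 * sumR (map g l).
Proof. induction l; unfold sumR in *; simpl; [ring|]. rewrite IHl. ring. Qed.

Lemma sumR_map_scal {A} c (f : A -> R) l :
  sumR (map (fun a => c * f a) l) = c * sumR (map f l).
Proof. induction l; unfold sumR in *; simpl; [ring|]. rewrite IHl. ring. Qed.

Lemma sumR_map_INR l : sumR (map INR l) = INR (sumn l).
Proof. induction l; unfold sumR in *; simpl; [reflexivity|]. rewrite IHl, plus_INR. ring. Qed.

Definition insert_at {A} (m : nat) (x : A) (l : list A) : list A :=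
  firstn m l ++ x :: skipn m l.

Lemma map_insert_at {A B} (f : A -> B) m x l :
  map f (insert_at m x l) = insert_at m (f x) (map f l).
Proof. unfold insert_at. now rewrite map_app, firstn_map, skipn_map. Qed.

Lemma sumR_insert_at m x l : sumR (insert_at m x l) = x + sumR l.
Proof.
  unfold insert_at. rewrite sumR_app. rewrite <- (firstn_skipn m l) at 3.
  rewrite sumR_app. simpl. lra.
Qed.

Lemma sumn_app l1 l2 : sumn (l1 ++ l2) = (sumn l1 + sumn l2)%nat.
Proof. induction l1; simpl; lia. Qed.

Lemma sumn_map_mul q l : sumn (map (Nat.mul q) l) = (q * sumn l)%nat.
Proof. induction l; simpl; lia. Qed.

Lemma nth_map_mul q l j : nth j (map (Nat.mul q) l) 0%nat = (q * nth j l 0)%nat.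
Proof. rewrite <- (Nat.mul_0_r q) at 1. apply map_nth. Qed.

Lemma Forall_of_nth_1 {A} (P : A -> Prop) l (d : A) :
  (forall j, (1 <= j <= length l)%nat -> P (nth (j - 1) l d)) -> Forall P l.
Proof.
  intros Hnth. apply Forall_nth. intros j a Hj. rewrite nth_indep with (d' := d) by lia.
  specialize (Hnth (S j) ltac:(lia)). now rewrite Nat.sub_succ, Nat.sub_0_r in Hnth.
Qed.

Lemma sumn_insert_at m x l : sumn (insert_at m x l) = (x + sumn l)%nat.
Proof.
  unfold insert_at. rewrite sumn_app. rewrite <- (firstn_skipn m l) at 3.
  rewrite sumn_app. simpl. lia.
Qed.

Lemma Forall_insert_at {A} (P : A -> Prop) m x l :
  P x -> Forall P l -> Forall P (insert_at m x l).
Proof.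
  intros Hx Hl. rewrite <- (firstn_skipn m l) in Hl.
  apply Forall_app in Hl as [H1 H2]. apply Forall_app; auto.
Qed.

Lemma nth_insert_at_lt {A} m x l j (d : A) : (j < m)%nat -> (m <= length l)%nat ->
  nth j (insert_at m x l) d = nth j l d.
Proof.
  intros Hj Hm. unfold insert_at.
  rewrite app_nth1 by (rewrite firstn_length_le; lia).
  rewrite nth_firstn. now replace (j <? m)%nat with true by (symmetry; apply Nat.ltb_lt; lia).
Qed.

Lemma nth_insert_at_eq {A} m x l (d : A) : (m <= length l)%nat ->
  nth m (insert_at m x l) d = x.
Proof.
  intros Hm. unfold insert_at.
  rewrite app_nth2; rewrite firstn_length_le by lia; [|lia].
  now rewrite Nat.sub_diag.
Qed.

Lemma nth_insert_at_gt {A} m x l j (d : A) : (m <= j)%nat -> (m <= length l)%nat ->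
  nth (S j) (insert_at m x l) d = nth j l d.
Proof.
  intros Hj Hm. unfold insert_at.
  rewrite app_nth2; rewrite firstn_length_le by lia; [|lia].
  replace (S j - m)%nat with (S (j - m)) by lia. simpl.
  rewrite nth_skipn. f_equal. lia.
Qed.

Lemma length_insert_at {A} m (x : A) l : (m <= length l)%nat ->
  length (insert_at m x l) = S (length l).
Proof.
  intros Hm. unfold insert_at.
  rewrite length_app, firstn_length_le by lia. simpl. rewrite length_skipn. lia.
Qed.

Lemma sorted_insert_at_exists (l : list nat) x : Sorted ge l ->
  exists m, (m <= length l)%nat /\ Sorted ge (insert_at m x l).
Proof.
  unfold insert_at.
  induction l as [|a l IH]; intros Hs.
  - exists 0%nat; simpl; split; [lia|]. repeat constructor.
  - inversion Hs as [|? ? Hl Hhd]; subst. destruct (Nat.le_gt_cases a x).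
    + exists 0%nat; simpl; split; [lia|]. constructor; auto; constructor; unfold ge; lia.
    + destruct (IH Hl) as [m [Hm Hs']]. exists (S m); simpl; split; [lia|].
      constructor; auto. destruct m; simpl.
      * constructor; unfold ge; lia.
      * destruct l; simpl; constructor. unfold ge; lia. now inversion Hhd.
Qed.

Definition entropy (xs : list R) : R := - sumR (map plogp xs).

Lemma Phi_exp_entropy xs : Forall (fun x => 0 < x) xs -> Phi xs = exp (entropy xs).
Proof.
  intros Hxs. unfold Phi, entropy. rewrite exp_Ropp. f_equal.
  induction Hxs as [|x xs Hx _ IH]; simpl; [now rewrite exp_0|].
  unfold sumR in *; simpl. rewrite exp_plus, IH. f_equal.
  unfold xpowx. destruct (Req_EM_T x 0); [lra | reflexivity].
Qed.

Lemma entropy_insert_at m x xs : entropy (insert_at m x xs) = entropy xs - plogp x.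
Proof. unfold entropy. rewrite map_insert_at, sumR_insert_at. ring. Qed.

Lemma entropy_scale t xs : 0 < t -> Forall (fun x => 0 < x) xs ->
  entropy (map (Rmult t) xs) = t * entropy xs - plogp t * sumR xs.
Proof.
  intros Ht Hxs. unfold entropy. rewrite map_map.
  rewrite (sumR_map_ext _ (fun x => plogp t * x + t * plogp x)).
  - rewrite sumR_map_lin, map_id. ring.
  - eapply Forall_impl; [|exact Hxs]. intros x Hx. unfold plogp. rewrite ln_mult; lra.
Qed.

Lemma entropy_nonneg xs : Forall (fun x => 0 < x <= 1) xs -> 0 <= entropy xs.
Proof.
  unfold entropy. induction 1 as [|x xs Hx _ IH]; unfold sumR in *; simpl; [lra|].
  assert (ln x <= 0) by (rewrite <- ln_1; apply ln_le_ln; lra).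
  assert (plogp x <= 0) by (unfold plogp; nra). lra.
Qed.

Lemma entropy_le_ln_inv g xs : 0 < g -> Forall (fun x => g <= x) xs -> sumR xs = 1 ->
  entropy xs <= - ln g.
Proof.
  intros Hg Hxs Hsum. unfold entropy.
  enough (Hle : sumR (map (fun x => ln g * x) xs) <= sumR (map plogp xs)).
  { rewrite sumR_map_scal, map_id, Hsum in Hle. lra. }
  apply sumR_map_le. eapply Forall_impl; [|exact Hxs]. intros x Hx. unfold plogp.
  assert (ln g <= ln x) by (apply ln_le_ln; lra). nra.
Qed.

Definition freqs (lam : list nat) : list R :=
  map (fun a => INR a / INR (sumn lam)) lam.

Lemma sumR_freqs lam : (0 < sumn lam)%nat -> sumR (freqs lam) = 1.
Proof.
  intros Hn. assert (HnR : 0 < INR (sumn lam)) by (apply lt_0_INR; lia).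
  unfold freqs. unfold Rdiv. setoid_rewrite Rmult_comm.
  rewrite sumR_map_scal, sumR_map_INR. field. lra.
Qed.

Lemma Phi_part_freqs lam : Phi_part lam = Phi (freqs lam).
Proof. reflexivity. Qed.

Lemma freqs_bounds lam : Forall (fun a => (0 < a)%nat) lam -> (0 < sumn lam)%nat ->
  Forall (fun x => 0 < x <= 1) (freqs lam).
Proof.
  intros Hpos Hn. assert (HnR : 0 < INR (sumn lam)) by (apply lt_0_INR; lia).
  unfold freqs. apply Forall_map, Forall_forall. intros a Ha.
  assert (0 < INR a) by (apply lt_0_INR; rewrite Forall_forall in Hpos; auto).
  assert (INR a <= INR (sumn lam)).
  { apply le_INR. clear - Ha. induction lam as [|b lam IH]; simpl in *; [tauto|].
    destruct Ha as [-> | Ha]; [|specialize (IH Ha)]; lia. }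
  split; [apply Rdiv_lt_0_compat; lra|].
  apply (Rmult_le_reg_r (INR (sumn lam))); [lra|]. field_simplify; lra.
Qed.

Lemma Phi_part_exp_entropy lam : Forall (fun a => (0 < a)%nat) lam -> (0 < sumn lam)%nat ->
  Phi_part lam = exp (entropy (freqs lam)).
Proof.
  intros Hpos Hn. apply Phi_exp_entropy.
  eapply Forall_impl; [|exact (freqs_bounds lam Hpos Hn)]. simpl; tauto.
Qed.

Lemma Phi_part_bounds gamma lam : 0 < gamma ->
  Forall (fun a => (0 < a)%nat) lam -> (0 < sumn lam)%nat ->
  Forall (fun a => gamma <= INR a / INR (sumn lam)) lam ->
  1 <= Phi_part lam <= / gamma.
Proof.
  intros Hg Hpos Hn Hgam. rewrite Phi_part_exp_entropy by assumption.
  split.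
  - rewrite <- exp_0. apply exp_le_exp, entropy_nonneg, freqs_bounds; assumption.
  - rewrite <- (exp_ln (/ gamma)) by (now apply Rinv_0_lt_compat).
    apply exp_le_exp. rewrite ln_Rinv by assumption.
    apply entropy_le_ln_inv; [assumption | now apply Forall_map | now apply sumR_freqs].
Qed.

Lemma freqs_scaled_insert lam q k m : (0 < sumn lam)%nat -> (q <= k)%nat -> (0 < k)%nat ->
  freqs (insert_at m ((k - q) * sumn lam)%nat (map (Nat.mul q) lam))
  = insert_at m (1 - INR q / INR k) (map (Rmult (INR q / INR k)) (freqs lam)).
Proof.
  intros Hn Hqk Hk.
  assert (HnR : 0 < INR (sumn lam)) by (apply lt_0_INR; lia).
  assert (HkR : 0 < INR k) by (apply lt_0_INR; lia).
  assert (Hsum : sumn (insert_at m ((k - q) * sumn lam)%nat (map (Nat.mul q) lam))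
                 = (k * sumn lam)%nat).
  { rewrite sumn_insert_at, sumn_map_mul, <- Nat.mul_add_distr_r. f_equal. lia. }
  unfold freqs at 1. rewrite Hsum, map_insert_at, map_map. unfold freqs. rewrite map_map.
  f_equal.
  - rewrite !mult_INR, minus_INR by assumption. field. lra.
  - apply map_ext. intros a. rewrite !mult_INR. field. lra.
Qed.

Lemma nat_ratio_bounds q k : (0 < q < k)%nat -> 0 < INR q / INR k < 1.
Proof.
  intros Hqk. assert (0 < INR q < INR k) by (split; [apply lt_0_INR | apply lt_INR]; lia).
  split; [apply Rdiv_lt_0_compat; lra|].
  apply (Rmult_lt_reg_r (INR k)); [lra|]. field_simplify; lra.
Qed.

Lemma Phi_part_scaled_insert lam q k m :
  Forall (fun a => (0 < a)%nat) lam -> (0 < sumn lam)%nat -> (0 < q < k)%nat ->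
  Phi_part (insert_at m ((k - q) * sumn lam)%nat (map (Nat.mul q) lam))
  = exp (INR q / INR k * ln (Phi_part lam)
         - plogp (INR q / INR k) - plogp (1 - INR q / INR k)).
Proof.
  intros Hpos Hn Hqk.
  set (t := INR q / INR k).
  destruct (nat_ratio_bounds q k Hqk) as [Ht Ht1]. fold t in Ht, Ht1.
  pose proof (freqs_bounds lam Hpos Hn) as Hfr.
  rewrite (Phi_part_exp_entropy lam), ln_exp by assumption.
  rewrite Phi_part_freqs, freqs_scaled_insert by lia. fold t.
  rewrite Phi_exp_entropy.
  - rewrite entropy_insert_at, entropy_scale, sumR_freqs; try assumption.
    + f_equal. ring.
    + eapply Forall_impl; [|exact Hfr]. simpl; tauto.
  - apply Forall_insert_at; [lra|]. apply Forall_map.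
    eapply Forall_impl; [|exact Hfr]. simpl. intros x Hx. nra.
Qed.

Lemma ratio_succ_bounds P : 1 <= P -> 1 / 2 <= P / (P + 1) < 1.
Proof.
  intros HP. split; [apply (Rmult_le_reg_r (P + 1)) | apply (Rmult_lt_reg_r (P + 1))];
    try lra; field_simplify; lra.
Qed.

Lemma nat_ratio_approx (k : nat) (s : R) : (2 <= k)%nat -> 1 / 2 <= s < 1 ->
  exists q : nat, (0 < q < k)%nat /\ Rabs (INR q / INR k - s) <= / INR k.
Proof.
  intros Hk Hs.
  assert (HkR : 2 <= INR k) by (apply (le_INR 2); assumption).
  destruct (base_Int_part (INR k * s)) as [Hfl Hfl'].
  assert (Hpos : (0 <= Int_part (INR k * s))%Z) by (apply le_IZR; nra).
  set (q := Z.to_nat (Int_part (INR k * s))).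
  assert (HqR : INR q = IZR (Int_part (INR k * s)))
    by (unfold q; rewrite INR_IZR_INZ, Z2Nat.id; auto).
  exists q. split; [split|].
  - apply INR_lt. simpl. nra.
  - apply INR_lt. nra.
  - rewrite HqR. apply Rabs_le. split;
      apply (Rmult_le_reg_r (INR k)); try lra;
      field_simplify; lra.
Qed.

Lemma scaled_insert_partition_exists lam n q k :
  is_partition lam n -> (0 < n)%nat -> (0 < q < k)%nat ->
  exists m, (m <= length lam)%nat /\
    is_partition (insert_at m ((k - q) * n)%nat (map (Nat.mul q) lam)) (k * n).
Proof.
  intros [Hsum [Hsorted Hpos]] Hn Hqk.
  assert (Hsorted_mul : Sorted ge (map (Nat.mul q) lam)).
  { clear - Hsorted. induction Hsorted as [|a l Hl IH Hhd]; simpl; constructor; auto.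
    destruct Hhd; simpl; constructor. unfold ge in *. nia. }
  destruct (sorted_insert_at_exists _ ((k - q) * n)%nat Hsorted_mul) as [m [Hm Hins]].
  rewrite length_map in Hm.
  exists m; repeat split; try assumption.
  - rewrite sumn_insert_at, <- Hsum.
    rewrite sumn_map_mul, <- Nat.mul_add_distr_r. f_equal. lia.
  - apply Forall_insert_at; [nia|]. apply Forall_map.
    eapply Forall_impl; [|exact Hpos]. simpl. intros; nia.
Qed.

Lemma mixing_error_lt (x P gamma eps K : R) : 1 <= K -> 1 <= P <= / gamma ->
  Rabs x <= / K -> (/ gamma + 1) ^ 3 < eps * K -> x ^ 2 * (P + 1) ^ 3 / P < eps.
Proof.
  intros HK HP Hx HC.
  assert (HKinv : 0 < / K <= 1).
  { split; [apply Rinv_0_lt_compat | rewrite <- Rinv_1; apply Rinv_le_contravar]; lra. }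
  assert (Hx2 : x ^ 2 <= / K) by (pose proof (Rabs_pos x); rewrite <- pow2_abs; nra).
  assert (HP3 : (P + 1) ^ 3 <= (/ gamma + 1) ^ 3) by (apply pow_incr; lra).
  assert (HP3' : (P + 1) ^ 3 / P <= (P + 1) ^ 3).
  { unfold Rdiv. rewrite <- (Rmult_1_r ((P + 1) ^ 3)) at 2.
    apply Rmult_le_compat_l; [apply pow_le; lra|].
    rewrite <- Rinv_1. apply Rinv_le_contravar; lra. }
  assert (0 <= (P + 1) ^ 3 / P)
    by (apply Rmult_le_pos; [apply pow_le | left; apply Rinv_0_lt_compat]; lra).
  assert (C_over_K : (/ gamma + 1) ^ 3 * / K < eps).
  { apply (Rmult_lt_reg_r K); [lra|]. rewrite Rmult_assoc, Rinv_l; lra. }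
  unfold Rdiv in *. rewrite Rmult_assoc. nra.
Qed.

Lemma nat_large_exists C eps : 0 < eps -> exists k : nat, (2 <= k)%nat /\ C < eps * INR k.
Proof.
  intros Heps. destruct (INR_unbounded (Rmax 2 (C / eps))) as [k Hk].
  pose proof (Rmax_l 2 (C / eps)). pose proof (Rmax_r 2 (C / eps)).
  exists k. split; [apply (INR_le 2); simpl; lra|].
  apply (Rmult_lt_reg_r (/ eps)); [now apply Rinv_0_lt_compat|].
  replace (eps * INR k * / eps) with (INR k) by (field; lra). unfold Rdiv in *. lra.
Qed.

Theorem lemma3 (d : nat) (gamma eps : R) :
  (1 <= d)%nat -> 0 < gamma -> 0 < eps ->
  exists k : nat, (0 < k)%nat /\
    forall (n : nat) (lam : list nat),
      is_partition lam n -> length lam = d ->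
      (forall j : nat, (1 <= j <= d)%nat -> INR (nth (j - 1) lam 0%nat) / INR n >= gamma) ->
      exists (i q : nat) (mu : list nat),
        (1 <= i <= d + 1)%nat /\ (1 <= q < k)%nat /\
        is_partition mu (k * n) /\ length mu = (d + 1)%nat /\
        (forall j : nat, (1 <= j <= i - 1)%nat ->
           nth (j - 1) mu 0%nat = (q * nth (j - 1) lam 0%nat)%nat) /\
        (forall j : nat, (i <= j <= d)%nat ->
           nth j mu 0%nat = (q * nth (j - 1) lam 0%nat)%nat) /\
        nth (i - 1) mu 0%nat = ((k - q) * n)%nat /\
        Rabs (Phi_part mu - Phi_part lam - 1) < eps.
Proof.
  intros Hd Hgamma Heps.
  destruct (nat_large_exists ((/ gamma + 1) ^ 3) eps Heps) as [k [Hk2 HkC]].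
  exists k; split; [lia|].
  intros n lam Hlam Hlen Hgam.
  pose proof Hlam as [Hsum [_ Hpos]].
  assert (Hn : (0 < n)%nat).
  { destruct lam as [|a l]; simpl in Hlen; [lia|]. inversion Hpos; simpl in Hsum; lia. }
  assert (Hfreq : Forall (fun a => gamma <= INR a / INR (sumn lam)) lam).
  { rewrite Hsum. apply (Forall_of_nth_1 _ _ 0%nat). intros j Hj.
    apply Rge_le, Hgam. lia. }
  set (P := Phi_part lam).
  assert (HP : 1 <= P <= / gamma) by (apply Phi_part_bounds; auto; lia).
  destruct (nat_ratio_approx k (P / (P + 1)) Hk2 (ratio_succ_bounds P (proj1 HP)))
    as [q [Hqk Happrox]].
  destruct (scaled_insert_partition_exists lam n q k Hlam Hn Hqk) as [m [Hm Hmu]].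
  exists (S m), q, (insert_at m ((k - q) * n)%nat (map (Nat.mul q) lam)).
  rewrite Hlen in Hm.
  split; [lia|]. split; [lia|]. split; [assumption|]. split.
  { rewrite length_insert_at; rewrite length_map; lia. }
  split; [|split; [|split]].
  - intros j Hj. rewrite nth_insert_at_lt, nth_map_mul; rewrite ?length_map; lia.
  - intros j Hj. replace j with (S (j - 1)) at 1 by lia.
    rewrite nth_insert_at_gt, nth_map_mul; rewrite ?length_map; lia.
  - rewrite Nat.sub_succ, Nat.sub_0_r, nth_insert_at_eq; rewrite ?length_map; lia.
  - rewrite <- Hsum at 1. rewrite Phi_part_scaled_insert by (auto; lia). fold P.
    rewrite <- Rminus_plus_distr.
    eapply Rle_lt_trans; [apply binary_mixing_bound; [lra | now apply nat_ratio_bounds]|].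
    apply (mixing_error_lt _ _ gamma _ (INR k)); auto.
    apply (le_INR 1). lia.
Qed.
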